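(* Let $1\le k\le m<2n$. Under the shuffle representation, the image of $v[k,m]$ is $$v[k,m]=\alpha_k^m\cdot(x_mx_{m-1}\cdots x_{k+1}x_k),\qquad \alpha_k^m=\varepsilon_k^m(q-1)^{m-k}\prod_{k\le i<j\le m}p_{ij},$$ where $\varepsilon_k^m=1+q$ if $k\le n\le m$ and $m\ne\phi(k)$; $\varepsilon_k^m=1+q^{-1}$ if $m=\phi(k)\ne n$; and $\varepsilon_k^m=1$ otherwise.
   Context: Let $\mathbf{k}$ be a field, $G$ an abelian group, $n\ge 2$, $X=\{x_1,\dots,x_n\}$. Fix $g_i\in G$, characters $\chi^i:G\to\mathbf{k}^*$, $p_{ij}=\chi^i(g_j)$; for words $u,v$, $g_u,\chi^u$ are obtained by replacing $x_i$ by $g_i$, resp. $\chi^i$, and $p(u,v)=\chi^u(g_v)$ (bimultiplicative). $G\langle X\rangle$: skew group algebra, $x_ig=\chi^i(g)gx_i$; skew bracket $[u,v]=uv-p(u,v)vu$. Fix $q\in\mathbf{k}^*$, $q^3\ne1$, $q\ne-1$; assume $p_{ii}=q$ ($i<n$), $p_{nn}=q^2$, $p_{i,i-1}p_{i-1,i}=q^{-1}$ ($1<i<n$), $p_{n-1,n}p_{n,n-1}=q^{-2}$, $p_{ij}p_{ji}=1$ ($j>i+1$). $U_q^+(\mathfrak{sp}_{2n})$ is the quotient of $G\langle X\rangle$ by the ideal generated by $[x_i,[x_i,x_{i+1}]]$, $[[x_i,x_{i+1}],x_{i+1}]$ ($1\le i<n-1$), $[x_i,x_j]$ ($j>i+1$),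 $[[x_{n-1},x_n],x_n]$, $[x_{n-1},[x_{n-1},[x_{n-1},x_n]]]$. For $n<i<2n$, $x_i:=x_{2n-i}$ (and $p_{ij}$ for such indices means $\chi$ of the corresponding generators, e.g. $p_{ij}=p_{2n-i,j}$ if $i>n\ge j$); $\phi(i)=2n-i$. $v(k,m)=x_k\cdots x_m$; $v[k,k]=x_k$; for $k<m$: $v[k,m]=[[\dots[x_k,x_{k+1}],\dots],x_m]$ if $m<\phi(k)$; $v[k,m]=[x_k,[x_{k+1},[\dots,[x_{m-1},x_m]\dots]]]$ if $m>\phi(k)$; $v[k,m]=v[k,m-1]x_m-q^{-1}p(v(k,m-1),x_m)x_mv[k,m-1]$ if $m=\phi(k)$. Shuffle representation: let $\mathrm{Sh}$ be the vector space with basis the comonomials $(z_1\cdots z_r)$, $z_i\in X$, $r\ge0$, with the braided shuffle product $(a_1\cdots a_r)(b_1\cdots b_s)=\sum_w c_w\,(w)$, the sum over all shuffles $w$ of the two sequences, where $c_w=\prod p(b,a)^{-1}$ over all pairs of a letter $a$ of the first factor and a letter $b$ of the second factor such that $b$ precedes $a$ in $w$. The map $x_i\mapsto(x_i)$ extends to an algebra homomorphism from the subalgebra of $U_q^+(\mathfrak{sp}_{2n})$ generated by $x_1,\dots,x_n$ into $\mathrm{Sh}$; ''the image under the shuffle representation'' refers to this homomorphism. *)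

From HB Require Import structures.
From mathcomp Require Import all_boot all_order all_algebra.
Set Implicit Arguments. Unset Strict Implicit. Unset Printing Implicit Defensive.
Import Order.TTheory GRing.Theory Num.Theory.
Local Open Scope ring_scope.

(* Generators x_1..x_n are represented by their indices 1..n (nat).
   The bicharacter is given by the matrix p : nat -> nat -> K, p i j = p_ij
   (only the values for 1 <= i,j <= n matter).
   An element of the shuffle space Sh is represented as a finite formal
   linear combination: a list of pairs (coefficient, comonomial), a comonomial
   being a word (list of generator indices).  Two such lists denote the same
   element of Sh iff they have the same coefficient function [shcoef]. *)

Section Shuffle.
Variables (K : fieldType) (n : nat) (q : K) (p : nat -> nat -> K).

Definition shT := seq (K * seq nat).

Definition shcoef (x : shT) (w : seq nat) : K :=
  \sum_(t <- x | t.2 == w) t.1.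

Definition pw (u v : seq nat) : K := \prod_(a <- u) \prod_(b <- v) p a b.

(* braided shuffle product of two comonomials: the sum over all shuffles w
   with coefficient prod p(b,a)^-1 over pairs (a from first, b from second)
   with b preceding a in w *)
Fixpoint shw (u : seq nat) : seq nat -> shT :=
  match u with
  | [::] => fun v => [:: (1, v)]
  | a :: u' =>
    fix shw_a (v : seq nat) : shT :=
      match v with
      | [::] => [:: (1, a :: u')]
      | b :: v' =>
          [seq (t.1, a :: t.2) | t <- shw u' v] ++
          [seq ((\prod_(a' <- a :: u') (p b a')^-1) * t.1, b :: t.2)
             | t <- shw_a v']
      end
  end.

Definition shadd (x y : shT) : shT := x ++ y.
Definition shscale (c : K) (x : shT) : shT := [seq (c * t.1, t.2) | t <- x].
Definition shmul (x y : shT) : shT :=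
  flatten [seq [seq (t1.1 * t2.1 * t.1, t.2) | t <- shw t1.2 t2.2]
          | t1 <- x, t2 <- y].

(* skew bracket [x, y] = xy - c yx, where c = p(deg x, deg y) *)
Definition shbr (c : K) (x y : shT) : shT := shadd (shmul x y) (shscale (- c) (shmul y x)).

(* indices n < i < 2n denote x_{2n-i} *)
Definition idx (i : nat) : nat := if (i <= n)%N then i else (2 * n - i)%N.
Definition phi (i : nat) : nat := (2 * n - i)%N.

Definition letter (i : nat) : shT := [:: (1, [:: idx i])].

Definition vw (k m : nat) : seq nat := [seq idx i | i <- iota k (m.+1 - k)].

Fixpoint lnest (k d : nat) : shT :=
  match d with
  | 0 => letter k
  | d'.+1 => shbr (pw (vw k (k + d')) [:: idx (k + d)])
                  (lnest k d') (letter (k + d))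
  end.

Fixpoint rnest (d k : nat) : shT :=
  match d with
  | 0 => letter k
  | d'.+1 => shbr (pw [:: idx k] (vw k.+1 (k + d)))
                  (letter k) (rnest d' k.+1)
  end.

(* image of v[k,m] under the shuffle representation (k <= m) *)
Definition vkm (k m : nat) : shT :=
  if (m <= k)%N then letter k
  else if (m < phi k)%N then lnest k (m - k)
  else if (phi k < m)%N then rnest (m - k) k
  else let L := lnest k (m.-1 - k) in
       shadd (shmul L (letter m))
             (shscale (- (q^-1 * pw (vw k m.-1) [:: idx m])) (shmul (letter m) L)).

Definition eps (k m : nat) : K :=
  if [&& (k <= n)%N, (n <= m)%N & m != phi k] then 1 + q
  else if (m == phi k) && (m != n) then 1 + q^-1
  else 1.

Definition alpha (k m : nat) : K :=
  eps k m * (q - 1) ^+ (m - k) *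
  \prod_(k <= i < m.+1) \prod_(i.+1 <= j < m.+1) p (idx i) (idx j).

Definition revword (k m : nat) : seq nat := rev (vw k m).

End Shuffle.

(* Bracketing a monomial a (w) of the shuffle algebra with one letter x_b gives a sum
   over the positions where x_b can be inserted into w; the coefficient of each position
   is governed by the product of the symmetrised bicharacter p(l, b) p(b, l) over the
   letters l on one side of it.  For the type C_n data this product is a power of q which
   is trivial except near occurrences of x_{b-1}, x_b, x_{b+1}.  Hence every insertion
   coefficient vanishes except at the extreme position, apart from the two positions
   flanking an earlier occurrence of x_b: these give the same word and cancel.  The
   surviving coefficient is exactly alpha_k^m / alpha_k^{m-1} (left-nested brackets,
   m <= phi(k)) or alpha_k^m / alpha_{k+1}^m (right-nested brackets, m > phi(k)), and
   the formula follows by induction on the length of the bracket. *)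

From Pilot Require Import Defs.
From HB Require Import structures.
From mathcomp Require Import all_boot all_order all_algebra.
From mathcomp Require Import ring zify.
Set Implicit Arguments. Unset Strict Implicit. Unset Printing Implicit Defensive.
Import Order.TTheory GRing.Theory Num.Theory.
Local Open Scope ring_scope.

Section NatIntervalBigops.

Lemma big_nat_window (R : Type) (e : R) (op : Monoid.law e) (F : nat -> R) lo hi c d :
  (lo <= c)%N -> (c + d <= hi)%N ->
  (forall i, (lo <= i < hi)%N -> (i < c)%N || (c + d <= i)%N -> F i = e) ->
  \big[op/e]_(lo <= i < hi) F i = \big[op/e]_(i <- iota c d) F i.
Proof.
move=> hlo hhi F1; rewrite (big_cat_nat hlo (leq_trans (leq_addr d c) hhi)).
rewrite (big_cat_nat (leq_addr d c) hhi) /=.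
rewrite [X in op X _]big1_seq ?[X in op _ (op _ X)]big1_seq ?Monoid.mul1m ?Monoid.mulm1.
- by rewrite /index_iota addKn.
- by move=> i /andP[_]; rewrite mem_index_iota => /andP[ci ih]; apply: F1; lia.
- by move=> i /andP[_]; rewrite mem_index_iota => /andP[li ic]; apply: F1; lia.
Qed.

Lemma prod_pairs_recr (R : comPzRingType) (F : nat -> nat -> R) k m : (k <= m.+1)%N ->
  \prod_(k <= i < m.+2) \prod_(i.+1 <= j < m.+2) F i j =
  (\prod_(k <= i < m.+1) \prod_(i.+1 <= j < m.+1) F i j) * \prod_(k <= i < m.+1) F i m.+1.
Proof.
move=> km; rewrite big_nat_recr //= [X in _ * X]big_geq // mulr1 -big_split.
by apply: eq_big_nat => i /andP[_ im]; rewrite big_nat_recr.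
Qed.

Variable V : zmodType.

Lemma big_nat_only1 (G : nat -> V) lo hi i0 : (lo <= i0 < hi)%N ->
  (forall i, (lo <= i < hi)%N -> i != i0 -> G i = 0) ->
  \sum_(lo <= i < hi) G i = G i0.
Proof.
move=> hi0 G0; rewrite (bigD1_seq i0) ?mem_index_iota ?iota_uniq //= big1_seq ?addr0 //.
by move=> i /andP[ne]; rewrite mem_index_iota => /G0 ->.
Qed.

Lemma big_nat_only1_pair (G : nat -> V) lo hi i0 j : (lo <= i0 < hi)%N ->
  (lo <= j)%N -> (j.+2 <= hi)%N -> i0 != j -> i0 != j.+1 -> G j + G j.+1 = 0 ->
  (forall i, (lo <= i < hi)%N -> i != i0 -> i != j -> i != j.+1 -> G i = 0) ->
  \sum_(lo <= i < hi) G i = G i0.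
Proof.
move=> hi0 hlo hhi ne0 ne1 Gj G0.
pose H i := if (i == j) || (i == j.+1) then 0 else G i.
have split_pair (F : nat -> V) : \sum_(lo <= i < hi) F i =
    \sum_(lo <= i < j) F i + (F j + F j.+1) + \sum_(j.+2 <= i < hi) F i.
  rewrite (big_cat_nat hlo (leq_trans (leqnSn j) (ltnW hhi))).
  rewrite (big_cat_nat (leq_trans (leqnSn j) (leqnSn j.+1)) hhi) /=.
  by rewrite (@big_ltn _ _ _ j j.+2) // big_nat1 addrA.
have -> : \sum_(lo <= i < hi) G i = \sum_(lo <= i < hi) H i.
  rewrite (split_pair G) (split_pair H) /H !eqxx orbT /= Gj addr0 !addr0.
  by congr (_ + _); apply: eq_big_nat => i hi_i; case: eqP => [ej|_]; case: eqP => [ej'|_] //=; lia.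
rewrite (@big_nat_only1 H lo hi i0) // /H; first by rewrite (negbTE ne0) (negbTE ne1).
by move=> i hi_i ne; case: (i == j) (i == j.+1) (G0 i hi_i ne) => [] [] // ->.
Qed.

End NatIntervalBigops.

Section ShuffleCalculus.
Variables (K : fieldType) (p : nat -> nat -> K).

Definition sheq (x y : shT K) : Prop := forall s, shcoef x s = shcoef y s.

Definition psym (a b : nat) : K := p a b * p b a.

Definition mono (a : K) (w : seq nat) : shT K := shscale a [:: (1, w)].

Definition sheval (g : seq nat -> K) (x : shT K) : K := \sum_(t <- x) g t.2 * t.1.

Definition ins (w : seq nat) (b i : nat) : seq nat := take i w ++ b :: drop i w.

Lemma shcoef_sheval x s : shcoef x s = sheval (fun w => (w == s)%:R) x.
Proof.
rewrite /shcoef big_mkcond; apply: eq_bigr => t _.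
by case: eqP; rewrite ?mul1r ?mul0r.
Qed.

Lemma shcoef_cons (t : K * seq nat) (x : shT K) s : shcoef (t :: x) s = (t.2 == s)%:R * t.1 + shcoef x s.
Proof. by rewrite /shcoef big_cons; case: eqP; rewrite ?mul1r ?mul0r ?add0r. Qed.

Lemma sheval_cat g x y : sheval g (x ++ y) = sheval g x + sheval g y.
Proof. exact: big_cat. Qed.

Lemma sheval_scale g c x : sheval g (shscale c x) = c * sheval g x.
Proof. by rewrite /sheval big_map big_distrr; apply: eq_bigr => t _; rewrite mulrCA. Qed.

Lemma sheval_mono g a w : sheval g (mono a w) = a * g w.
Proof. by rewrite sheval_scale /sheval big_seq1 mulr1. Qed.

Lemma sheval_mul g x y :
  sheval g (shmul p x y) =
  sheval (fun u => sheval (fun v => sheval g (shw p u v)) y) x.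
Proof.
rewrite /sheval /shmul big_flatten /= big_allpairs_dep /=.
apply: eq_bigr => t1 _; rewrite big_distrl; apply: eq_bigr => t2 _ /=.
rewrite big_map !big_distrl; apply: eq_bigr => t _ /=.
by ring.
Qed.

Lemma sheval_shcoef g x S : uniq S -> {subset map snd x <= S} ->
  sheval g x = \sum_(s <- S) g s * shcoef x s.
Proof.
move=> uS; elim: x => [|t x IH] sub.
  by rewrite /sheval big_nil big1 // => s _; rewrite /shcoef big_nil mulr0.
have tS : t.2 \in S by apply: sub; rewrite inE eqxx.
rewrite /sheval big_cons -/(sheval g x) IH => [|z zx]; last by apply: sub; rewrite inE zx orbT.
under [RHS]eq_bigr do rewrite shcoef_cons mulrDr.
rewrite big_split /=; congr (_ + _).
rewrite (bigD1_seq t.2) //= eqxx mul1r big1 ?addr0 // => s /negbTE.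
by rewrite eq_sym => ->; rewrite mul0r mulr0.
Qed.

Lemma eq_sheval g x y : sheq x y -> sheval g x = sheval g y.
Proof.
pose S := undup (map snd x ++ map snd y).
have uS : uniq S by exact: undup_uniq.
move=> exy; rewrite (@sheval_shcoef g x S) => [|//|z zx]; last by rewrite mem_undup mem_cat zx.
rewrite (@sheval_shcoef g y S) => [|//|z zy]; last by rewrite mem_undup mem_cat zy orbT.
by apply: eq_bigr => s _; rewrite exy.
Qed.

Lemma sheval_mul_mono g x y a b u v : sheq x (mono a u) -> sheq y (mono b v) ->
  sheval g (shmul p x y) = a * b * sheval g (shw p u v).
Proof.
move=> ex ey; rewrite sheval_mul (eq_sheval _ ex) sheval_mono.
by rewrite (eq_sheval _ ey) sheval_mono mulrA.
Qed.

Lemma sheq_letter b : sheq [:: (1, [:: b])] (mono 1 [:: b]).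
Proof. by move=> s; rewrite /mono /shscale /= mulr1. Qed.

Lemma sheval_shw_letterr g w b :
  sheval g (shw p w [:: b]) =
  \sum_(0 <= i < (size w).+1) g (ins w b i) * \prod_(l <- drop i w) (p b l)^-1.
Proof.
elim: w g => [|a u IH] g; first by rewrite /sheval big_seq1 big_nat1 /ins /= big_nil.
rewrite /sheval /= big_cat big_map /= -/(sheval (fun s => g (a :: s)) _) IH.
rewrite big_cons big_nil addr0 big_nat_recl // /ins /= addrC mulr1.
by congr (_ + _).
Qed.

Lemma sheval_shw_letterl g w b :
  sheval g (shw p [:: b] w) =
  \sum_(0 <= i < (size w).+1) g (ins w b i) * \prod_(l <- take i w) (p l b)^-1.
Proof.
elim: w g => [|a u IH] g; first by rewrite /sheval big_seq1 big_nat1 /ins /= big_nil.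
have -> : shw p [:: b] (a :: u) = (1, b :: a :: u) ::
    [seq ((\prod_(a' <- [:: b]) (p a a')^-1) * t.1, a :: t.2) | t <- shw p [:: b] u] by [].
rewrite big_seq1 /sheval big_cons big_map /=.
under eq_bigr do rewrite mulrCA.
rewrite -big_distrr -/(sheval (fun s => g (a :: s)) _) IH big_nat_recl //.
rewrite /ins take0 drop0 big_nil mulr1 big_distrr; congr (_ + _).
by apply: eq_bigr => i _; rewrite /= big_cons mulrCA.
Qed.

Lemma ins_nth w b j : (j < size w)%N -> nth 0%N w j = b -> ins w b j = ins w b j.+1.
Proof. by move=> hj wj; rewrite /ins (take_nth 0%N hj) (drop_nth 0%N hj) wj cat_rcons. Qed.

Lemma shcoef_mono a w s : shcoef (mono a w) s = (w == s)%:R * a.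
Proof. by rewrite shcoef_sheval sheval_mono mulrC. Qed.

Lemma shcoef_shbr c x y s :
  shcoef (shbr p c x y) s =
  sheval (fun w => (w == s)%:R) (shmul p x y) - c * sheval (fun w => (w == s)%:R) (shmul p y x).
Proof. by rewrite /shbr /shadd !shcoef_sheval sheval_cat sheval_scale mulNr. Qed.

Definition coefl (w : seq nat) (b : nat) (c0 : K) (i : nat) : K :=
  \prod_(l <- drop i w) (p b l)^-1 * (1 - c0 * \prod_(l <- drop i w) psym l b).

Definition coefr (w : seq nat) (b : nat) (c0 : K) (i : nat) : K :=
  \prod_(l <- take i w) (p l b)^-1 * (1 - c0 * \prod_(l <- take i w) psym l b).

Section LetterBracket.
Variables (x : shT K) (a : K) (w : seq nat) (b : nat) (c0 : K).
Hypotheses (xE : sheq x (mono a w))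
  (pwb_neq0 : {in w, forall l, p l b != 0}) (pbw_neq0 : {in w, forall l, p b l != 0}).

Let take_neq0 i : (\prod_(l <- take i w) p l b != 0) * (\prod_(l <- take i w) p b l != 0).
Proof. by rewrite !prodf_seq_neq0; split; apply/allP => l /mem_take;
  [exact: pwb_neq0 | exact: pbw_neq0].
Qed.

Let drop_neq0 i : (\prod_(l <- drop i w) p l b != 0) * (\prod_(l <- drop i w) p b l != 0).
Proof. by rewrite !prodf_seq_neq0; split; apply/allP => l /mem_drop;
  [exact: pwb_neq0 | exact: pbw_neq0].
Qed.

Lemma shcoef_shbr_letterl s :
  shcoef (shbr p (c0 * \prod_(l <- w) p l b) x [:: (1, [:: b])]) s =
  a * \sum_(0 <= i < (size w).+1) (ins w b i == s)%:R * coefl w b c0 i.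
Proof.
rewrite shcoef_shbr !(sheval_mul_mono _ xE (sheq_letter b)) !mulr1.
rewrite (sheval_mul_mono _ (sheq_letter b) xE) mul1r.
rewrite sheval_shw_letterr sheval_shw_letterl -mulrCA -mulrBr; congr (_ * _).
rewrite big_distrr -sumrB; apply: eq_bigr => i _.
rewrite /coefl /psym -[in \prod_(l <- w) p l b](cat_take_drop i w) big_cat big_split /= !prodfV.
by field; rewrite ?take_neq0 ?drop_neq0.
Qed.

Lemma shcoef_shbr_letterr s :
  shcoef (shbr p (c0 * \prod_(l <- w) p b l) [:: (1, [:: b])] x) s =
  a * \sum_(0 <= i < (size w).+1) (ins w b i == s)%:R * coefr w b c0 i.
Proof.
rewrite shcoef_shbr (sheval_mul_mono _ xE (sheq_letter b)) mulr1.
rewrite (sheval_mul_mono _ (sheq_letter b) xE) mul1r.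
rewrite sheval_shw_letterr sheval_shw_letterl mulrCA -mulrBr; congr (_ * _).
rewrite big_distrr -sumrB; apply: eq_bigr => i _.
rewrite /coefr /psym -[in \prod_(l <- w) p b l](cat_take_drop i w) big_cat big_split /= !prodfV.
by field; rewrite ?take_neq0 ?drop_neq0.
Qed.

Lemma sheq_shbr_letterl_single :
  (forall i, (0 < i <= size w)%N -> c0 * \prod_(l <- drop i w) psym l b = 1) ->
  sheq (shbr p (c0 * \prod_(l <- w) p l b) x [:: (1, [:: b])])
       (mono (a * coefl w b c0 0) (b :: w)).
Proof.
move=> psym1 s; rewrite shcoef_shbr_letterl shcoef_mono (@big_nat_only1 _ _ _ _ 0) //.
  by rewrite /ins take0 drop0 mulrCA.
by move=> i /andP[_ hi] i0; rewrite /coefl psym1 ?subrr ?mulr0 //; lia.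
Qed.

Lemma sheq_shbr_letterl_pair j : (0 < j < size w)%N -> nth 0%N w j = b -> p b b != 0 ->
  c0 * \prod_(l <- drop j.+1 w) psym l b = (p b b)^-1 ->
  (forall i, (0 < i <= size w)%N -> i != j -> i != j.+1 -> c0 * \prod_(l <- drop i w) psym l b = 1) ->
  sheq (shbr p (c0 * \prod_(l <- w) p l b) x [:: (1, [:: b])])
       (mono (a * coefl w b c0 0) (b :: w)).
Proof.
move=> /andP[j0 jw] wj pbb0 psymj psym1 s.
rewrite shcoef_shbr_letterl shcoef_mono (@big_nat_only1_pair _ _ _ _ 0 j) //; try lia.
- by rewrite /ins take0 drop0 mulrCA.
- rewrite (ins_nth jw wj) -mulrDr /coefl (drop_nth 0%N jw) wj !big_cons mulrCA.
  by rewrite psymj /psym; field.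
- by move=> i /andP[_ hi] ? ? ?; rewrite /coefl psym1 ?subrr ?mulr0 //; lia.
Qed.

Lemma sheq_shbr_letterr_single :
  (forall i, (i < size w)%N -> c0 * \prod_(l <- take i w) psym l b = 1) ->
  sheq (shbr p (c0 * \prod_(l <- w) p b l) [:: (1, [:: b])] x)
       (mono (a * coefr w b c0 (size w)) (rcons w b)).
Proof.
move=> psym1 s; rewrite shcoef_shbr_letterr shcoef_mono (@big_nat_only1 _ _ _ _ (size w)) ?leqnn //.
  by rewrite /ins take_size drop_size cats1 mulrCA.
by move=> i /andP[_ hi] iw; rewrite /coefr psym1 ?subrr ?mulr0 //; lia.
Qed.

Lemma sheq_shbr_letterr_pair j : (j.+1 < size w)%N -> nth 0%N w j = b -> p b b != 0 ->
  c0 * \prod_(l <- take j w) psym l b = (p b b)^-1 ->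
  (forall i, (i < size w)%N -> i != j -> i != j.+1 -> c0 * \prod_(l <- take i w) psym l b = 1) ->
  sheq (shbr p (c0 * \prod_(l <- w) p b l) [:: (1, [:: b])] x)
       (mono (a * coefr w b c0 (size w)) (rcons w b)).
Proof.
move=> jw wj pbb0 psymj psym1 s; have jw' : (j < size w)%N by lia.
rewrite shcoef_shbr_letterr shcoef_mono (@big_nat_only1_pair _ _ _ _ (size w) j) //; try lia.
- by rewrite /ins take_size drop_size cats1 mulrCA.
- rewrite (ins_nth jw' wj) -mulrDr /coefr (take_nth 0%N jw') wj -cats1 !big_cat !big_seq1 /=.
  by rewrite mulrA psymj /psym; field.
- by move=> i /andP[_ hi] ? ? ?; rewrite /coefr psym1 ?subrr ?mulr0 //; lia.
Qed.

End LetterBracket.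

End ShuffleCalculus.

Section TypeC.
Variables (K : fieldType) (n : nat) (q : K) (p : nat -> nat -> K).
Hypotheses (hq0 : q != 0)
  (hp0 : forall i j, (1 <= i <= n)%N -> (1 <= j <= n)%N -> p i j != 0)
  (hpii : forall i, (1 <= i < n)%N -> p i i = q)
  (hpadj : forall i, (1 < i < n)%N -> p i i.-1 * p i.-1 i = q^-1)
  (hpn : p n.-1 n * p n n.-1 = q ^- 2)
  (hpfar : forall i j, (1 <= i)%N -> (i.+1 < j <= n)%N -> p i j * p j i = 1).

Local Notation idx := (idx n).
Local Notation psym := (psym p).

Lemma psymC a b : psym a b = psym b a.
Proof. exact: mulrC. Qed.

Lemma psym_diag a : (1 <= a < n)%N -> psym a a = q ^+ 2.
Proof. by move=> ha; rewrite /psym hpii. Qed.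

Lemma psym_succ a : (1 <= a)%N -> (a.+1 < n)%N -> psym a a.+1 = q^-1.
Proof. by move=> a1 an; rewrite /psym mulrC; apply: (hpadj (i := a.+1)); lia. Qed.

Lemma psym_pred a : (1 < a < n)%N -> psym a.-1 a = q^-1.
Proof. by move=> ha; rewrite psymC; apply: hpadj. Qed.

Lemma psym_predn : psym n.-1 n = q ^- 2.
Proof. exact: hpn. Qed.

Lemma psym_far a b : (1 <= a <= n)%N -> (1 <= b <= n)%N -> (a.+1 < b)%N || (b.+1 < a)%N ->
  psym a b = 1.
Proof.
move=> ha hb /orP[ab|ba]; first by apply: hpfar; lia.
by rewrite psymC; apply: hpfar; lia.
Qed.

Lemma idx_le j : (j <= n)%N -> idx j = j.
Proof. by rewrite /Defs.idx => ->. Qed.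

Lemma idx_ge j : (n <= j)%N -> idx j = (2 * n - j)%N.
Proof. by move=> nj; rewrite /Defs.idx; case: leqP => // jn; lia. Qed.

Lemma idx_range j : (1 <= j < 2 * n)%N -> (1 <= idx j <= n)%N.
Proof. by case: (leqP j n) => ?; [rewrite idx_le | rewrite idx_ge]; lia. Qed.

Definition psym_prod (lo hi b : nat) : K := \prod_(lo <= j < hi) psym (idx j) b.

Lemma psym_prod_window lo hi b c d : (lo <= c)%N -> (c + d <= hi)%N ->
  (forall j, (lo <= j < hi)%N -> (j < c)%N || (c + d <= j)%N -> psym (idx j) b = 1) ->
  psym_prod lo hi b = \prod_(j <- iota c d) psym (idx j) b.
Proof. exact: big_nat_window. Qed.

Ltac psym_far_tac :=
  let j := fresh "j" in
  intro j; intros; case: (leqP j n) => ?;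
    [rewrite idx_le; last lia | rewrite idx_ge; last lia]; apply: psym_far; lia.

Lemma psym_prod_far_low lo hi b : (1 <= lo)%N -> (hi < b <= n)%N -> psym_prod lo hi b = 1.
Proof. move=> lo1 hb; rewrite /psym_prod big_nat_cond big1 //; psym_far_tac. Qed.

Lemma psym_prod_far_high lo hi b : (1 <= b <= n)%N -> ((2 * n - b).+1 < lo)%N ->
  (hi <= 2 * n)%N -> psym_prod lo hi b = 1.
Proof. move=> hb hlo hhi; rewrite /psym_prod big_nat_cond big1 //; psym_far_tac. Qed.

Lemma psym_prod_adj k b : (1 <= k < b)%N -> (b < n)%N -> psym_prod k b b = q^-1.
Proof.
move=> hk hb; rewrite (psym_prod_window (c := b.-1) (d := 1)); [|lia|lia|psym_far_tac].
by rewrite /= big_seq1 idx_le ?psym_pred //; lia.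
Qed.

Lemma psym_prod_adjn k : (1 <= k < n)%N -> psym_prod k n n = q ^- 2.
Proof.
move=> hk; rewrite (psym_prod_window (c := n.-1) (d := 1)); [|lia|lia|psym_far_tac].
by rewrite /= big_seq1 idx_le ?psym_predn //; lia.
Qed.

Lemma psym_prod_mirror lo hi b : (n <= lo <= hi)%N -> (hi <= 2 * n)%N ->
  psym_prod lo hi b = psym_prod (2 * n - hi).+1 (2 * n - lo).+1 b.
Proof.
case/andP=> nlo; elim: hi => [|h IH] lohi hi2n; first by rewrite /psym_prod !big_geq //; lia.
case: (ltngtP lo h.+1) => [loh|?|<-]; [|lia|by rewrite /psym_prod !big_geq //; lia].
rewrite /psym_prod big_nat_recr /=; last lia.
rewrite (@big_ltn _ _ _ (2 * n - h.+1).+1); last lia.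
rewrite -!/(psym_prod _ _ b) IH; [|lia..].
rewrite (_ : (2 * n - h.+1).+1 = 2 * n - h)%N; last lia.
by rewrite mulrC (idx_ge (j := h)) ?idx_le //; lia.
Qed.

Lemma psym_prod_mirror_adj lo m b : (1 <= b < n)%N -> (lo + b = (2 * n).+1)%N ->
  (lo <= m < 2 * n)%N -> psym_prod lo m.+1 b = q^-1.
Proof.
move=> hb hlo hm; rewrite psym_prod_mirror; [|lia..].
by rewrite (_ : (2 * n - lo).+1 = b)%N ?psym_prod_adj //; lia.
Qed.

Lemma psym_prod_mirror_adjn m : (n < m < 2 * n)%N -> psym_prod n.+1 m.+1 n = q ^- 2.
Proof.
move=> hm; rewrite psym_prod_mirror; [|lia..].
by rewrite (_ : (2 * n - n.+1).+1 = n)%N ?psym_prod_adjn //; lia.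
Qed.

Lemma psym_prod_around k J b : (1 <= k < b)%N -> (b.+2 <= J < 2 * n - b)%N ->
  psym_prod k J b = 1.
Proof.
move=> hk hJ; rewrite (psym_prod_window (c := b.-1) (d := 3)); [|lia|lia|psym_far_tac].
rewrite /= !big_cons big_nil mulr1 prednK ?idx_le; [|lia..].
by rewrite psym_pred ?psym_diag ?(psymC b.+1) ?psym_succ; [field|lia..].
Qed.

Lemma psym_prod_recr lo hi b : (lo < hi)%N ->
  psym_prod lo hi b = psym_prod lo hi.-1 b * psym (idx hi.-1) b.
Proof. by move=> lohi; rewrite /psym_prod -{1}(ltn_predK lohi) big_nat_recr //; lia. Qed.

Lemma psym_prod_diag k J : (1 <= k)%N -> (k.+2 <= J < 2 * n - k)%N -> psym_prod k J k = q.
Proof.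
move=> hk hJ; rewrite (psym_prod_window (c := k) (d := 2)); [|lia|lia|psym_far_tac].
rewrite /= !big_cons big_nil mulr1 !idx_le; [|lia..].
by rewrite psym_diag ?(psymC k.+1) ?psym_succ; [field|lia..].
Qed.

Lemma psym_prod_phi k : (1 <= k < n)%N -> psym_prod k (2 * n - k) k = 1.
Proof.
move=> hk; have [kn|kn] : (k.+1 < n)%N \/ k.+1 = n by lia.
  rewrite psym_prod_recr ?psym_prod_diag ?idx_ge; [|lia..].
  rewrite (_ : 2 * n - (2 * n - k).-1 = k.+1)%N; last lia.
  by rewrite psymC psym_succ; [field|lia..].
rewrite (psym_prod_window (c := k) (d := 2)); [|lia|lia|psym_far_tac].
rewrite /= !big_cons big_nil mulr1 !idx_le; [|lia..].
by rewrite psym_diag // kn psymC -[k]/(k.+1.-1) kn psym_predn; field.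
Qed.

Lemma psym_prod_phi_adj k m : (1 <= k)%N -> (n < m)%N -> (k < 2 * n - m)%N ->
  psym_prod k m (2 * n - m) = q^-1.
Proof.
move=> hk nm km; set b := (2 * n - m)%N.
have [bn|bn] : (b.+1 < n)%N \/ b.+1 = n by lia.
  rewrite psym_prod_recr ?psym_prod_around ?idx_ge; [|lia..].
  rewrite (_ : 2 * n - m.-1 = b.+1)%N; last lia.
  by rewrite psymC psym_succ; [field|lia..].
rewrite (psym_prod_window (c := b.-1) (d := 3)); [|lia|lia|psym_far_tac].
rewrite /= !big_cons big_nil mulr1 prednK ?idx_le; [|lia..].
rewrite psym_pred ?psym_diag; [|lia..].
by rewrite bn psymC -[b]/(b.+1.-1) bn psym_predn; field.
Qed.

Lemma psym_prod_around_mirror k J m : (1 <= k < n)%N -> (k.+2 <= J < 2 * n - k)%N ->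
  (2 * n - k < m < 2 * n)%N -> psym_prod J m.+1 k = 1.
Proof.
move=> hk hJ hm.
rewrite (psym_prod_window (c := 2 * n - k.+1) (d := 3)); [|lia|lia|psym_far_tac].
rewrite /= !big_cons big_nil mulr1 !idx_ge; [|lia..].
rewrite (_ : 2 * n - (2 * n - k.+1) = k.+1)%N; last lia.
rewrite (_ : 2 * n - (2 * n - k.+1).+1 = k)%N; last lia.
rewrite (_ : 2 * n - (2 * n - k.+1).+2 = k.-1)%N; last lia.
by rewrite psymC psym_succ ?psym_diag ?psym_pred; [field|lia..].
Qed.

Lemma psym_prod_succ_mirror k m : (1 <= k < n)%N -> (2 * n - k < m < 2 * n)%N ->
  psym_prod k.+1 m.+1 k = q^-1.
Proof.
move=> hk hm; have [kn|kn] : (k.+1 < n)%N \/ k.+1 = n by lia.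
  rewrite /psym_prod big_ltn -/(psym_prod _ _ k); last lia.
  rewrite (psym_prod_around_mirror (m := m)); [|lia|lia|lia].
  by rewrite idx_le ?(psymC k.+1) ?psym_succ ?mulr1 //; lia.
rewrite (psym_prod_window (c := k.+1) (d := 3)); [|lia|lia|psym_far_tac].
rewrite /= !big_cons big_nil mulr1 idx_le ?idx_ge; [|lia..].
rewrite (_ : 2 * n - k.+2 = k)%N; last lia.
rewrite (_ : 2 * n - k.+3 = k.-1)%N; last lia.
rewrite psymC -[k in psym k _]/(k.+1.-1) kn psym_predn psym_diag ?psym_pred; [|lia..].
by field.
Qed.

Local Notation eps := (eps n q).
Local Notation alpha := (alpha n q p).
Local Notation revword := (revword n).

Lemma eps_mid k m : (k <= n <= m)%N -> m != (2 * n - k)%N -> eps k m = 1 + q.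
Proof. by case/andP=> kn nm mphi; rewrite /Defs.eps /phi kn nm mphi. Qed.

Lemma eps_phi k m : m = (2 * n - k)%N -> m != n -> eps k m = 1 + q^-1.
Proof. by move=> mphi mn; rewrite /Defs.eps /phi -mphi eqxx mn !andbF. Qed.

Lemma eps_out k m : ~~ (k <= n <= m)%N -> m != (2 * n - k)%N -> eps k m = 1.
Proof. by move=> /negbTE knm mphi; rewrite /Defs.eps /phi (negbTE mphi) andbT knm. Qed.

Lemma alpha_diag k : alpha k k = 1.
Proof.
rewrite /Defs.alpha /Defs.eps /phi subnn expr0 big_nat1 big_geq // !mulr1.
by case: ifP => [/and3P[? ? /eqP]|_]; [lia|case: ifP => // /andP[/eqP ? /eqP]; lia].
Qed.

Lemma size_revword k m : size (revword k m) = (m.+1 - k)%N.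
Proof. by rewrite size_rev size_map size_iota. Qed.

Lemma revword_cons k m : (k <= m.+1)%N -> revword k m.+1 = idx m.+1 :: revword k m.
Proof.
move=> km; rewrite /Defs.revword /vw (_ : m.+2 - k = (m.+1 - k).+1)%N; last lia.
by rewrite -addn1 iotaD map_cat rev_cat /= (_ : k + (m.+1 - k) = m.+1)%N //; lia.
Qed.

Lemma revword_rcons k m : (k <= m)%N -> revword k m = rcons (revword k.+1 m) (idx k).
Proof.
move=> km; rewrite /Defs.revword /vw (_ : m.+1 - k = (m.+1 - k.+1).+1)%N; last lia.
by rewrite /= rev_cons.
Qed.

Lemma nth_revword k m i : (k <= m)%N -> (i <= m - k)%N -> nth 0%N (revword k m) i = idx (m - i).
Proof.
move=> km im; rewrite /Defs.revword /vw nth_rev ?size_map ?size_iota; last lia.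
by rewrite (nth_map 0%N) ?size_iota ?nth_iota; [congr idx|..]; lia.
Qed.

Lemma prod_revword (F : nat -> K) k m :
  \prod_(l <- revword k m) F l = \prod_(k <= j < m.+1) F (idx j).
Proof. by rewrite big_rev big_map. Qed.

Lemma prod_drop_revword b k m i : (k <= m.+1)%N ->
  \prod_(l <- drop i (revword k m)) psym l b = psym_prod k (m.+1 - i) b.
Proof.
move=> km; rewrite drop_rev size_map size_iota -map_take take_iota big_rev big_map.
rewrite /index_iota; congr (\prod_(j <- iota _ _) _); lia.
Qed.

Lemma prod_take_revword b k m i : (k <= m.+1)%N -> (i <= m.+1 - k)%N ->
  \prod_(l <- take i (revword k m)) psym l b = psym_prod (m.+1 - i) m.+1 b.
Proof.
move=> km im; rewrite take_rev size_map size_iota -map_drop drop_iota big_rev big_map.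
rewrite /index_iota; congr (\prod_(j <- iota _ _) _); lia.
Qed.

Lemma revword_letters k m : (1 <= k)%N -> (m < 2 * n)%N ->
  {in revword k m, forall l, (1 <= l <= n)%N}.
Proof.
move=> k1 m2n l; rewrite mem_rev => /mapP[j]; rewrite mem_iota => hj ->.
by apply: idx_range; lia.
Qed.

Lemma alpha_recl k m c0 : (1 <= k < m)%N -> (m < 2 * n)%N ->
  eps k m * (q - 1) * psym_prod k m (idx m) = eps k m.-1 * (1 - c0 * psym_prod k m (idx m)) ->
  alpha k m = alpha k m.-1 * coefl p (revword k m.-1) (idx m) c0 0.
Proof.
case: m => [|m] hkm hm; first lia.
rewrite /coefl prod_drop_revword; last lia.
rewrite drop0 prod_revword subn0 /=.
rewrite /Defs.alpha prod_pairs_recr; last lia.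
rewrite (_ : m.+1 - k = (m - k).+1)%N ?exprS; last lia.
rewrite /psym_prod /psym big_split /= prodfV.
set P := \prod_(k <= i < m.+1) p (idx i) (idx m.+1).
set Q := \prod_(k <= i < m.+1) p (idx m.+1) (idx i).
set Pi := \prod_(k <= i < m.+1) _.
have Q0 : Q != 0.
  rewrite prodf_seq_neq0; apply/allP => j; rewrite mem_index_iota => hj.
  by apply: hp0; apply: idx_range; lia.
move=> H; rewrite [RHS](_ : _ = eps k m * (1 - c0 * (P * Q)) * ((q - 1) ^+ (m - k) * Pi / Q)).
  by rewrite -H; field.
by field.
Qed.

Lemma alpha_recr k m c0 : (1 <= k < m)%N -> (m < 2 * n)%N ->
  eps k m * (q - 1) * psym_prod k.+1 m.+1 (idx k) =
    eps k.+1 m * (1 - c0 * psym_prod k.+1 m.+1 (idx k)) ->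
  alpha k m = alpha k.+1 m * coefr p (revword k.+1 m) (idx k) c0 (m - k).
Proof.
move=> hkm hm; rewrite /coefr prod_take_revword; [|lia|lia].
rewrite take_oversize ?size_revword ?prod_revword; last lia.
rewrite (_ : m.+1 - (m - k) = k.+1)%N; last lia.
rewrite /Defs.alpha big_ltn; last lia.
rewrite (_ : m - k = (m - k.+1).+1)%N ?exprS; last lia.
rewrite /psym_prod /psym big_split /= prodfV.
set P := \prod_(k.+1 <= j < m.+1) p (idx j) (idx k).
set Q := \prod_(k.+1 <= j < m.+1) p (idx k) (idx j).
set Pi := \prod_(k.+1 <= i < m.+1) _.
have P0 : P != 0.
  rewrite prodf_seq_neq0; apply/allP => j; rewrite mem_index_iota => hj.
  by apply: hp0; apply: idx_range; lia.
move=> H; rewrite [RHS](_ : _ = eps k.+1 m * (1 - c0 * (P * Q)) * ((q - 1) ^+ (m - k.+1) * Pi / P)).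
  by rewrite -H; field.
by field.
Qed.

Lemma alpha_lnest k m : (1 <= k < m)%N -> (m < 2 * n - k)%N ->
  alpha k m = alpha k m.-1 * coefl p (revword k m.-1) (idx m) 1 0.
Proof.
move=> hkm hm; apply: alpha_recl; [lia|lia|rewrite mul1r].
have [mn|mn|->] := ltngtP m n.
- rewrite idx_le ?psym_prod_adj ?eps_out; [by field|lia..].
- rewrite idx_ge ?psym_prod_phi_adj ?eps_mid; [by field|lia..].
- rewrite idx_le ?psym_prod_adjn; [|lia..].
  by rewrite eps_mid ?eps_out; [field|lia..].
Qed.

Lemma alpha_phi k : (1 <= k < n)%N ->
  alpha k (2 * n - k) = alpha k (2 * n - k).-1 * coefl p (revword k (2 * n - k).-1) k q^-1 0.
Proof.
move=> hk; have idx_phi : idx (2 * n - k) = k by rewrite idx_ge; lia.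
have := @alpha_recl k (2 * n - k) q^-1; rewrite idx_phi; apply; [lia|lia|].
rewrite psym_prod_phi; last lia.
rewrite eps_phi; [|lia|lia].
by rewrite eps_mid; [field|lia..].
Qed.

Lemma alpha_rnest k m : (1 <= k < m)%N -> (2 * n - k < m < 2 * n)%N ->
  alpha k m = alpha k.+1 m * coefr p (revword k.+1 m) (idx k) 1 (m - k).
Proof.
move=> hk hm; apply: alpha_recr; [lia|lia|rewrite mul1r].
have [nk|kn|<-] := ltngtP n k.
- rewrite idx_ge ?psym_prod_mirror_adj ?eps_out; [by field|lia..].
- by rewrite idx_le ?psym_prod_succ_mirror ?eps_mid; [field|lia..].
- rewrite idx_le ?psym_prod_mirror_adjn; [|lia..].
  by rewrite eps_mid ?eps_out; [field|lia..].
Qed.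

Lemma pw_vw_letter k m b : pw p (vw n k m) [:: b] = \prod_(l <- revword k m) p l b.
Proof. by rewrite /pw /Defs.revword big_rev; apply: eq_bigr => l _; rewrite big_seq1. Qed.

Lemma pw_letter_vw k m a : pw p [:: a] (vw n k m) = \prod_(l <- revword k m) p a l.
Proof. by rewrite /pw big_seq1 /Defs.revword big_rev. Qed.

Lemma sheq_letter_diag k : sheq (letter K n k) (mono (alpha k k) (revword k k)).
Proof. by rewrite alpha_diag /Defs.revword /vw subSnn; apply: sheq_letter. Qed.

Lemma lnest_sheq d k : (1 <= k)%N -> (k + d < 2 * n - k)%N ->
  sheq (lnest n p k d) (mono (alpha k (k + d)) (revword k (k + d))).
Proof.
elim: d k => [|d IH] k hk hkd; first by rewrite addn0; apply: sheq_letter_diag.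
set w := revword k (k + d); set b := idx (k + d).+1.
have -> : lnest n p k d.+1 = shbr p (1 * \prod_(l <- w) p l b) (lnest n p k d) [:: (1, [:: b])].
  by rewrite /= mul1r -pw_vw_letter addnS.
rewrite addnS revword_cons ?(alpha_lnest (m := (k + d).+1)) /=; [|lia..].
have b_range : (1 <= b <= n)%N by apply: idx_range; lia.
have w_range : {in w, forall l, (1 <= l <= n)%N} by apply: revword_letters; lia.
have pwb : {in w, forall l, p l b != 0} by move=> l /w_range ?; apply: hp0.
have pbw : {in w, forall l, p b l != 0} by move=> l /w_range ?; apply: hp0.
have {}IH : sheq (lnest n p k d) (mono (alpha k (k + d)) w) by apply: IH; lia.
have [mn|nm] := leqP (k + d).+1 n.
  have eb : b = (k + d).+1 by rewrite /b idx_le.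
  apply: (sheq_shbr_letterl_single IH pwb pbw) => i hi.
  by rewrite mul1r prod_drop_revword ?eb ?psym_prod_far_low //; lia.
set beta := (2 * n - (k + d).+1)%N; have eb : b = beta by rewrite /b idx_ge; lia.
apply: (sheq_shbr_letterl_pair IH pwb pbw (j := k + d - beta)).
- by rewrite size_revword; lia.
- by rewrite nth_revword ?eb ?idx_le; lia.
- by apply: hp0.
- rewrite mul1r prod_drop_revword ?eb ?hpii; [|lia..].
  by rewrite (_ : (k + d).+1 - (k + d - beta).+1 = beta)%N ?psym_prod_adj //; lia.
- move=> i; rewrite size_revword => hi ij ij1; rewrite mul1r prod_drop_revword ?eb; last lia.
  have [Jb|bJ] := ltnP ((k + d).+1 - i) beta; first by rewrite psym_prod_far_low //; lia.
  by rewrite psym_prod_around //; lia.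
Qed.

Lemma vkm_phi_sheq k : (1 <= k < n)%N ->
  sheq (vkm n q p k (2 * n - k)) (mono (alpha k (2 * n - k)) (revword k (2 * n - k))).
Proof.
move=> hk; set m := (2 * n - k)%N; set w := revword k m.-1.
have idx_m : idx m = k by rewrite idx_ge; lia.
have -> : vkm n q p k m = shbr p (q^-1 * \prod_(l <- w) p l k) (lnest n p k (m.-1 - k)) [:: (1, [:: k])].
  rewrite /vkm /phi -/m ltnn (_ : (m <= k)%N = false); last lia.
  by rewrite /letter pw_vw_letter idx_m.
have rw : revword k m = k :: w.
  by rewrite /w -{1}(@prednK m) ?revword_cons ?prednK ?idx_m //; lia.
rewrite rw alpha_phi -/m; last lia.
have w_range : {in w, forall l, (1 <= l <= n)%N} by apply: revword_letters; lia.
have pwk : {in w, forall l, p l k != 0} by move=> l /w_range ?; apply: hp0; lia.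
have pkw : {in w, forall l, p k l != 0} by move=> l /w_range ?; apply: hp0; lia.
have IH : sheq (lnest n p k (m.-1 - k)) (mono (alpha k m.-1) w).
  move: (@lnest_sheq (m.-1 - k) k); rewrite (_ : (k + (m.-1 - k) = m.-1)%N); last lia.
  by apply; lia.
apply: (sheq_shbr_letterl_pair IH pwk pkw (j := m.-1 - k)).
- by rewrite size_revword; lia.
- by rewrite nth_revword ?idx_le; lia.
- by apply: hp0; lia.
- rewrite prod_drop_revword ?hpii; [|lia..].
  by rewrite /psym_prod big_geq ?mulr1 //; lia.
- move=> i; rewrite size_revword => hi ij ij1; rewrite prod_drop_revword; last lia.
  by rewrite psym_prod_diag ?mulVf //; lia.
Qed.

Lemma rnest_sheq d k : (1 <= k)%N -> (2 * n - k < k + d < 2 * n)%N ->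
  sheq (rnest n p d k) (mono (alpha k (k + d)) (revword k (k + d))).
Proof.
elim: d k => [|d IH] k hk hkd; first by rewrite addn0; apply: sheq_letter_diag.
set m := (k + d.+1)%N; set w := revword k.+1 m; set a := idx k.
have -> : rnest n p d.+1 k = shbr p (1 * \prod_(l <- w) p a l) [:: (1, [:: a])] (rnest n p d k.+1).
  by rewrite /= mul1r -pw_letter_vw.
rewrite (revword_rcons (m := m)) 1?(alpha_rnest (k := k) (m := m)); [|lia..].
rewrite (_ : m - k = size w)%N; last by rewrite size_revword; lia.
have a_range : (1 <= a <= n)%N by apply: idx_range; lia.
have w_range : {in w, forall l, (1 <= l <= n)%N} by apply: revword_letters; lia.
have pwa : {in w, forall l, p l a != 0} by move=> l /w_range ?; apply: hp0.
have paw : {in w, forall l, p a l != 0} by move=> l /w_range ?; apply: hp0.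
have {}IH : sheq (rnest n p d k.+1) (mono (alpha k.+1 m) w).
  by move: (IH k.+1); rewrite addSnnS; apply; lia.
have [nk|kn|nk] := ltngtP n k.
- have ea : a = (2 * n - k)%N by rewrite /a idx_ge; lia.
  apply: (sheq_shbr_letterr_single IH pwa paw) => i hi.
  rewrite size_revword in hi; rewrite mul1r prod_take_revword ?ea; [|lia..].
  by rewrite psym_prod_far_high //; lia.
- have ea : a = k by rewrite /a idx_le; lia.
  apply: (sheq_shbr_letterr_pair IH pwa paw (j := m - (2 * n - k))).
  + by rewrite size_revword; lia.
  + by rewrite nth_revword ?idx_ge ?ea; lia.
  + by apply: hp0.
  + rewrite mul1r prod_take_revword ?ea ?hpii; [|lia..].
    by rewrite psym_prod_mirror_adj //; lia.
  + move=> i; rewrite size_revword => hi ij ij1; rewrite mul1r prod_take_revword ?ea; [|lia..].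
    have [far|near] := ltnP (2 * n - k).+1 (m.+1 - i); first by rewrite psym_prod_far_high //; lia.
    by rewrite (psym_prod_around_mirror (k := k)) //; lia.
- have ea : a = n by rewrite /a -nk idx_le.
  apply: (sheq_shbr_letterr_single IH pwa paw) => i hi.
  rewrite size_revword in hi; rewrite mul1r prod_take_revword ?ea; [|lia..].
  by rewrite psym_prod_far_high //; lia.
Qed.

Lemma vkm_sheq k m : (1 <= k <= m)%N -> (m < 2 * n)%N ->
  sheq (vkm n q p k m) (mono (alpha k m) (revword k m)).
Proof.
move=> /andP[hk km] hm; have [mk|mk] := leqP m k.
  by rewrite (_ : m = k) /vkm ?leqnn; [apply: sheq_letter_diag | lia].
have [lt|gt|eq] := ltngtP m (phi n k).
- rewrite /vkm leqNgt mk lt /=.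
  by move: (@lnest_sheq (m - k) k); rewrite subnKC //; apply; rewrite /phi in lt; lia.
- rewrite /vkm leqNgt mk ltnNge (ltnW gt) gt /=.
  by move: (@rnest_sheq (m - k) k); rewrite subnKC //; apply; rewrite /phi in gt; lia.
- by rewrite eq /phi; apply: vkm_phi_sheq; rewrite /phi in eq; lia.
Qed.

End TypeC.

Theorem proposition4p2 (K : fieldType) (n : nat) (q : K) (p : nat -> nat -> K)
  (hn : (2 <= n)%N)
  (hq0 : q != 0) (hq3 : q ^+ 3 != 1) (hq1 : q != -1)
  (hp0 : forall i j, (1 <= i <= n)%N -> (1 <= j <= n)%N -> p i j != 0)
  (hpii : forall i, (1 <= i < n)%N -> p i i = q)
  (hpnn : p n n = q ^+ 2)
  (hpadj : forall i, (1 < i < n)%N -> p i i.-1 * p i.-1 i = q^-1)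
  (hpn : p n.-1 n * p n n.-1 = q ^- 2)
  (hpfar : forall i j, (1 <= i)%N -> (i.+1 < j <= n)%N -> p i j * p j i = 1)
  (k m : nat) (hk : (1 <= k)%N) (hkm : (k <= m)%N) (hm : (m < 2 * n)%N) :
  forall w : seq nat,
    shcoef (vkm n q p k m) w
    = shcoef (shscale (alpha n q p k m) [:: (1, revword n k m)]) w.
Proof.
by apply: vkm_sheq => //; rewrite hk.
Qed.
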